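(* Let $n$ be a positive odd integer. Then, modulo $(1-aq^n)(a-q^n)$, $$ \sum_{k=0}^{n-1}\frac{(aq;q^2)_k\,(q/a;q^2)_k}{(q^2;q^2)_k^2}\, x^k \equiv \sum_{k=0}^{(n-1)/2}{(n-1)/2\brack k}_{q^2}^2 q^{k^2-nk} (-x)^k\, (x;q^2)_{(n-1)/2-k}. $$
   Context: $a,q,x$ are indeterminates. The $q$-shifted factorial is $(y;q)_0=1$ and $(y;q)_m=(1-y)(1-yq)\cdots(1-yq^{m-1})$ for $m\geqslant1$. The $q$-binomial coefficient is ${N\brack k}_q=\frac{(q;q)_N}{(q;q)_k(q;q)_{N-k}}$ for $0\leqslant k\leqslant N$ and $0$ otherwise; ${N\brack k}_{q^2}$ is this with $q$ replaced by $q^2$. For rational functions $A,B$ and a polynomial $P$, $A\equiv B\pmod P$ means $A-B=P\cdot C/D$ for polynomials $C,D$ with $D$ coprime to $P$. *)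

From HB Require Import structures.
From mathcomp Require Import all_boot all_order all_algebra fraction.
Set Implicit Arguments. Unset Strict Implicit. Unset Printing Implicit Defensive.
Import Order.TTheory GRing.Theory Num.Theory.
Local Open Scope ring_scope.

(* Polynomial ring Q[a,q,x], built as nested univariate polynomials:
   Pa = Q[a], Pq = Pa[q], Px = Pq[x]. *)
Definition Pa := {poly rat}.
Definition Pq := {poly Pa}.
Definition Px := {poly Pq}.
Definition Fx := {fraction Px}.
Definition toF (p : Px) : Fx := @FracField.tofrac Px p.

Definition pa : Px := ('X : Pa)%:P%:P.
Definition pq : Px := ('X : Pq)%:P.
Definition px : Px := 'X.

Definition A : Fx := toF pa.
Definition Qv : Fx := toF pq.
Definition X : Fx := toF px.

Definition qpoch (y b : Fx) (m : nat) : Fx := \prod_(i < m) (1 - y * b ^+ i).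

Definition qbinom (b : Fx) (N k : nat) : Fx :=
  if (k <= N)%N then qpoch b b N / (qpoch b b k * qpoch b b (N - k)) else 0.

Definition pdivides (g p : Px) : Prop := exists c : Px, p = g * c.

Definition pcoprime (p d : Px) : Prop :=
  forall g : Px, pdivides g p -> pdivides g d -> g \is a GRing.unit.

Definition congr_mod (P : Px) (U V : Fx) : Prop :=
  exists C D : Px, pcoprime P D /\ (U - V) * toF D = toF P * toF C.

From HB Require Import structures.
From mathcomp Require Import all_boot all_order all_algebra fraction polyXY.
From mathcomp Require Import ring zify.

(* The product (aq;q^2)_k (q/a;q^2)_k is a polynomial in t = a + 1/a with
   coefficients in Q(q), and
     a + 1/a - (q^n + q^-n) = -(1 - a q^n)(a - q^n) / (a q^n).
   So, working with fractions whose denominators a^i r(q) are coprime to the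
   modulus, the left-hand side is congruent to its value at a = q^n.  There the
   series terminates, and comparing coefficients of x^l reduces the resulting
   exact identity to the q-Chu-Vandermonde formula. *)

Set Implicit Arguments.
Unset Strict Implicit.
Unset Printing Implicit Defensive.

Import Order.TTheory GRing.Theory Num.Theory.
Local Open Scope ring_scope.

Definition qpochhammer (R : pzRingType) (y b : R) (m : nat) : R :=
  \prod_(i < m) (1 - y * b ^+ i).

Definition qbinomial (F : fieldType) (b : F) (N k : nat) : F :=
  if (k <= N)%N then
    qpochhammer b b N / (qpochhammer b b k * qpochhammer b b (N - k))
  else 0.

Lemma qpochhammerS (R : pzRingType) (y b : R) m :
  qpochhammer y b m.+1 = qpochhammer y b m * (1 - y * b ^+ m).
Proof. by rewrite /qpochhammer big_ord_recr. Qed.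

Section QBinomial.

Variables (F : fieldType) (Q : F).
Hypothesis Q_neq0 : Q != 0.
Hypothesis Q_pow_neq1 : forall j, (0 < j)%N -> Q ^+ j != 1.

Local Notation qfac m := (qpochhammer Q Q m).
Local Notation qbin := (qbinomial Q).

Lemma qfacS m : qfac m.+1 = qfac m * (1 - Q ^+ m.+1).
Proof. by rewrite qpochhammerS exprS. Qed.

Lemma subr1_QpowS_neq0 m : 1 - Q ^+ m.+1 != 0.
Proof. by rewrite subr_eq0 eq_sym Q_pow_neq1. Qed.

Lemma qfac_neq0 m : qfac m != 0.
Proof. by apply/prodf_neq0 => i _; rewrite -exprS subr1_QpowS_neq0. Qed.

Lemma qbinomialE N k : (k <= N)%N -> qbin N k = qfac N / (qfac k * qfac (N - k)).
Proof. by rewrite /qbinomial => ->. Qed.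

Lemma qbinomial_out N k : (N < k)%N -> qbin N k = 0.
Proof. by move=> ltNk; rewrite /qbinomial leqNgt ltNk. Qed.

Lemma qbinomial0 N : qbin N 0 = 1.
Proof. by rewrite qbinomialE // subn0 /qpochhammer big_ord0 mul1r divff ?qfac_neq0. Qed.

Lemma qbinomialnn N : qbin N N = 1.
Proof. by rewrite qbinomialE // subnn /qpochhammer big_ord0 mulr1 divff ?qfac_neq0. Qed.

Lemma qbinomialS M j : qbin M.+1 j.+1 = qbin M j.+1 + Q ^+ (M - j) * qbin M j.
Proof.
have [ltjM|] := ltnP j M; last first.
  rewrite leq_eqVlt => /orP [/eqP ->|ltMj].
    by rewrite !qbinomialnn qbinomial_out // subnn mul1r add0r.
  by rewrite !qbinomial_out ?mulr0 ?addr0 // ltnW.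
have [d ->] : exists d, M = (j + d).+1 by exists (M - j.+1)%N; lia.
rewrite !qbinomialE; try lia.
rewrite !subSS subSn ?leq_addr // addKn !qfacS.
have -> : Q ^+ (j + d).+2 = Q ^+ d.+1 * Q ^+ j.+1 by rewrite -exprD; congr (_ ^+ _); lia.
by field; rewrite !qfac_neq0 !subr1_QpowS_neq0.
Qed.

Lemma qbinomial_neq0 N k : (k <= N)%N -> qbin N k != 0.
Proof. by move=> leNk; rewrite qbinomialE // mulf_neq0 ?invr_eq0 ?mulf_neq0 ?qfac_neq0. Qed.

Lemma qbinomial_trinomial N k l : (k <= l)%N -> (l <= N)%N ->
  qbin N k * qbin (N - k) (l - k) = qbin N l * qbin l (l - k).
Proof.
move=> lekl lelN; rewrite !qbinomialE; try lia.
have -> : (N - k - (l - k) = N - l)%N by lia.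
rewrite subKn //.
by field; rewrite !qfac_neq0.
Qed.

Definition qprodX (c : F) (M : nat) : {poly F} :=
  \prod_(i < M) (1 + (c * Q ^+ i)%:P * 'X).

Lemma qprodXS c M : qprodX c M.+1 = qprodX c M * (1 + (c * Q ^+ M)%:P * 'X).
Proof. by rewrite /qprodX big_ord_recr. Qed.

Lemma coef_qprodX c M j : (qprodX c M)`_j = qbin M j * c ^+ j * Q ^+ 'C(j, 2).
Proof.
elim: M j => [|M IH] j.
  rewrite /qprodX big_ord0 coef1; case: j => [|j]; first by rewrite qbinomial0 !mulr1.
  by rewrite qbinomial_out // !mul0r.
rewrite qprodXS mulrDr mulr1 coefD mulrCA coefCM coefMX.
case: j => [|j] /=; first by rewrite mulr0 addr0 IH !qbinomial0.
rewrite !IH qbinomialS binS bin1 exprS exprD.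
have [lejM|ltMj] := leqP j M; last by rewrite (qbinomial_out ltMj) !mul0r !mulr0 !addr0.
have -> : Q ^+ M = Q ^+ (M - j) * Q ^+ j by rewrite -exprD subnK.
ring.
Qed.

Lemma qprodXD c N l : qprodX c (N + l) = qprodX c N * qprodX (c * Q ^+ N) l.
Proof.
elim: l => [|l IH]; first by rewrite addn0 /qprodX big_ord0 mulr1.
by rewrite addnS !qprodXS IH -mulrA exprD [c * (_ * _)]mulrA.
Qed.

Lemma horner_qprodX M x : (qprodX (-1) M).[x] = qpochhammer x Q M.
Proof.
rewrite /qprodX horner_prod; apply: eq_bigr => i _.
by rewrite hornerD hornerCM hornerX hornerC mulN1r mulNr [Q ^+ i * x]mulrC.
Qed.

Lemma q_vandermonde N l :
  qbin (N + l) l * Q ^+ 'C(l, 2) =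
  \sum_(j < l.+1) (qbin N j * Q ^+ 'C(j, 2)) *
     (qbin l (l - j) * (Q ^+ N) ^+ (l - j) * Q ^+ 'C(l - j, 2)).
Proof.
have := coef_qprodX 1 (N + l) l; rewrite qprodXD coefM expr1n mulr1 => <-.
by apply: eq_bigr => j _; rewrite !coef_qprodX expr1n mulr1 mul1r.
Qed.

Lemma qpochhammer_QpowS N l : qpochhammer (Q ^+ N.+1) Q l = qfac (N + l) / qfac N.
Proof.
elim: l => [|l IH]; first by rewrite addn0 /qpochhammer big_ord0 divff ?qfac_neq0.
by rewrite qpochhammerS IH addnS qfacS -exprD addSn mulrAC.
Qed.

Lemma qpochhammer_Qinv N l : (l <= N)%N ->
  qpochhammer (Q ^+ N)^-1 Q l =
  (-1) ^+ l * Q ^+ 'C(l, 2) / Q ^+ (N * l) * (qfac N / qfac (N - l)).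
Proof.
elim: l => [|l IH] lelN.
  by rewrite /qpochhammer big_ord0 muln0 subn0 divff ?qfac_neq0 // invr1 !mulr1.
have [d defN] : exists d, N = (l + d.+1)%N by exists (N - l.+1)%N; lia.
rewrite qpochhammerS IH ?(ltnW lelN) //.
have -> : (N - l = d.+1)%N by lia.
have -> : (N - l.+1 = d)%N by lia.
rewrite qfacS binS bin1 exprD mulnS exprD [(-1) ^+ l.+1]exprS.
have -> : Q ^+ N = Q ^+ l * Q ^+ d.+1 by rewrite defN exprD.
by field; rewrite qfac_neq0 subr1_QpowS_neq0 !expf_neq0.
Qed.

Lemma qpochhammer_Qinv_out N l : (N < l)%N -> qpochhammer (Q ^+ N)^-1 Q l = 0.
Proof.
move=> ltNl; apply/eqP; rewrite prodf_seq_eq0; apply/hasP.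
by exists (Ordinal ltNl); rewrite ?mem_index_enum //= mulVf ?subrr ?expf_neq0.
Qed.

Lemma qseries_coefE N l : (l <= N)%N ->
  qpochhammer (Q ^+ N.+1) Q l * qpochhammer (Q ^+ N)^-1 Q l / qfac l ^+ 2 =
  (-1) ^+ l * Q ^+ 'C(l, 2) / Q ^+ (N * l) * (qbin N l * qbin (N + l) l).
Proof.
move=> lelN; rewrite qpochhammer_QpowS qpochhammer_Qinv // !qbinomialE ?leq_addl // addnK.
by field; rewrite !qfac_neq0 !expf_neq0.
Qed.

Lemma qbinomial_sq_convolution N l : (l <= N)%N ->
  \sum_(k < l.+1) qbin N k ^+ 2 * (Q ^+ 'C(k, 2) / Q ^+ (N * k)) * (-1) ^+ k *
     (qbin (N - k) (l - k) * (-1) ^+ (l - k) * Q ^+ 'C(l - k, 2)) =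
  (-1) ^+ l * Q ^+ 'C(l, 2) / Q ^+ (N * l) * (qbin N l * qbin (N + l) l).
Proof.
move=> lelN.
have -> : (-1) ^+ l * Q ^+ 'C(l, 2) / Q ^+ (N * l) * (qbin N l * qbin (N + l) l) =
    (-1) ^+ l * qbin N l / Q ^+ (N * l) * (qbin (N + l) l * Q ^+ 'C(l, 2)) by ring.
rewrite q_vandermonde mulr_sumr; apply: eq_bigr => -[k /= ltkl] _.
have lekN : (k <= N)%N by apply: leq_trans lelN.
have -> : qbin (N - k) (l - k) = qbin N l * qbin l (l - k) / qbin N k.
  by rewrite -qbinomial_trinomial // mulrC mulKf ?qbinomial_neq0.
have -> : (-1) ^+ l = (-1) ^+ k * (-1) ^+ (l - k) :> F by rewrite -exprD subnKC.
have -> : Q ^+ (N * l) = Q ^+ (N * k) * (Q ^+ N) ^+ (l - k).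
  by rewrite -exprM -exprD -mulnDr subnKC.
by field; rewrite qbinomial_neq0 // !expf_neq0.
Qed.

Lemma qseries_identity N x :
  \sum_(k < N.*2.+1)
     qpochhammer (Q ^+ N.+1) Q k * qpochhammer (Q ^+ N)^-1 Q k / qfac k ^+ 2 * x ^+ k =
  \sum_(k < N.+1)
     qbin N k ^+ 2 * (Q ^+ 'C(k, 2) / Q ^+ (N * k)) * (- x) ^+ k * qpochhammer x Q (N - k).
Proof.
pose a k := qpochhammer (Q ^+ N.+1) Q k * qpochhammer (Q ^+ N)^-1 Q k / qfac k ^+ 2.
pose c k := qbin N k ^+ 2 * (Q ^+ 'C(k, 2) / Q ^+ (N * k)) * (-1) ^+ k.
pose b k l := qbin (N - k) (l - k) * (-1) ^+ (l - k) * Q ^+ 'C(l - k, 2).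
pose R := \sum_(k < N.+1) c k *: ('X ^+ k * qprodX (-1) (N - k)).
transitivity (\poly_(k < N.*2.+1) a k).[x]; first by rewrite horner_poly.
transitivity R.[x]; last first.
  rewrite /R horner_sum; apply: eq_bigr => k _.
  by rewrite hornerZ hornerM hornerXn horner_qprodX /c [(- x) ^+ _]exprNn !mulrA.
congr horner; apply/polyP => l.
have -> : R`_l = \sum_(k < N.+1) c k * (if (l < k)%N then 0 else b k l).
  by rewrite /R coef_sum; apply: eq_bigr => k _; rewrite coefZ coefXnM coef_qprodX.
rewrite coef_poly; have [lelN|ltNl] := leqP l N.
  rewrite ifT; last by rewrite ltnS -addnn (leq_trans lelN) ?leq_addr.
  rewrite /a (qseries_coefE lelN).
  rewrite -qbinomial_sq_convolution // (big_ord_widen N.+1 (fun k => c k * b k l)) //.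
  by rewrite big_mkcond; apply: eq_bigr => k _; rewrite ltnS; case: leqP; rewrite ?mulr0.
rewrite big1 => [|k _]; last first.
  by case: ifP => _; rewrite ?mulr0 // /b qbinomial_out ?mul0r ?mulr0 //; have := ltn_ord k; lia.
by case: ifP => // _; rewrite /a qpochhammer_Qinv_out // mulr0 !mul0r.
Qed.

End QBinomial.

Section TerminatingSeries.

Variables (F : fieldType) (q : F).
Hypothesis q_neq0 : q != 0.
Hypothesis q2_pow_neq1 : forall j, (0 < j)%N -> (q ^+ 2) ^+ j != 1.

Lemma expfz_sq_sub_odd N k :
  q ^ ((k ^ 2)%:Z - (N.*2.+1 * k)%:Z) = (q ^+ 2) ^+ 'C(k, 2) / (q ^+ 2) ^+ (N * k).
Proof.
have sqk : (k ^ 2 = 'C(k, 2) * 2 + k)%N by elim: k => // k IH; rewrite binS bin1; nia.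
have nk : (N.*2.+1 * k = N * k * 2 + k)%N by rewrite -mul2n; lia.
rewrite expfzDr // -exprnN.
change (q ^+ (k ^ 2) / q ^+ (N.*2.+1 * k) = (q ^+ 2) ^+ 'C(k, 2) / (q ^+ 2) ^+ (N * k)).
rewrite sqk nk !exprD (mulnC 'C(k, 2)) (mulnC (N * k)) !exprM.
by rewrite invfM mulrACA divff ?expf_neq0 // mulr1.
Qed.

Lemma qseries_at_qn n x : odd n ->
  \sum_(k < n) qpochhammer (q ^+ n * q) (q ^+ 2) k * qpochhammer (q / q ^+ n) (q ^+ 2) k
      / qpochhammer (q ^+ 2) (q ^+ 2) k ^+ 2 * x ^+ k =
  \sum_(k < (n.-1)./2.+1) qbinomial (q ^+ 2) (n.-1)./2 k ^+ 2
      * q ^ ((k ^ 2)%:Z - (n * k)%:Z) * (- x) ^+ k * qpochhammer x (q ^+ 2) ((n.-1)./2 - k).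
Proof.
move=> odd_n; have [N ->] : exists N, n = N.*2.+1.
  by exists n./2; rewrite -[LHS]odd_double_half odd_n.
rewrite /= doubleK.
have -> : q ^+ N.*2.+1 * q = (q ^+ 2) ^+ N.+1 by rewrite -exprSr -exprM mul2n.
have -> : q / q ^+ N.*2.+1 = ((q ^+ 2) ^+ N)^-1.
  by rewrite exprS invfM mulrA divff // mul1r -exprM mul2n.
under [RHS]eq_bigr => k _ do rewrite expfz_sq_sub_odd.
by apply: qseries_identity; rewrite ?expf_neq0.
Qed.

End TerminatingSeries.

Definition qpoch_sym (F : fieldType) (q t : F) (k : nat) : F :=
  \prod_(i < k) (1 + q ^+ (4 * i + 2) - q ^+ (2 * i + 1) * t).

Lemma qpochhammer_mul_symE (F : fieldType) (a q : F) k : a != 0 ->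
  qpochhammer (a * q) (q ^+ 2) k * qpochhammer (q / a) (q ^+ 2) k = qpoch_sym q (a + a^-1) k.
Proof.
move=> a_neq0; rewrite /qpochhammer -big_split; apply: eq_bigr => i _ /=.
have -> : q ^+ (4 * i + 2) = (q ^+ (2 * i + 1)) ^+ 2 by rewrite -exprM; congr (_ ^+ _); lia.
have qi : q * (q ^+ 2) ^+ i = q ^+ (2 * i + 1) by rewrite -exprM -exprS addn1.
rewrite -mulrA qi mulrAC qi.
by field.
Qed.

Lemma sub_addr_inv (F : fieldType) (a v : F) : a != 0 -> v != 0 ->
  a + a^-1 - (v + v^-1) = (1 - a * v) * (a - v) * - (a * v)^-1.
Proof. by move=> a_neq0 v_neq0; field; rewrite a_neq0 v_neq0. Qed.

HB.instance Definition _ := GRing.RMorphism.copy toF (@FracField.tofrac Px).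

Definition embq : {rmorphism {poly rat} -> Px} :=
  (polyC \o map_poly (polyC : rat -> Pa))%FUN.

Lemma embqX : embq 'X = pq.
Proof. by rewrite /= map_polyX. Qed.

Lemma polyC_of_mul_polyC (R : idomainType) (p p' : {poly R}) (c : R) :
  c != 0 -> p * p' = c%:P -> p = (p`_0)%:P.
Proof.
move=> c_neq0 pp'E; have pp'_neq0 : p * p' != 0 by rewrite pp'E polyC_eq0.
have [p_neq0 p'_neq0] : p != 0 /\ p' != 0.
  by split; apply: contraNneq pp'_neq0 => ->; rewrite ?mul0r ?mulr0.
apply: size1_polyC; have := size_mul p_neq0 p'_neq0.
rewrite pp'E size_polyC c_neq0; have := size_poly_gt0 p'; rewrite p'_neq0; lia.
Qed.

Lemma dvd_embq (g : Px) s : s != 0 -> pdivides g (embq s) -> exists r, g = embq r.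
Proof.
(* Such a divisor is constant in x, and after swapping the roles of a and q,
   also constant in a. *)
move=> s_neq0 [h sE]; have sq_neq0 : s^:P != 0 by rewrite map_poly_eq0.
have gE := polyC_of_mul_polyC sq_neq0 (esym sE).
have hE := polyC_of_mul_polyC sq_neq0 (etrans (mulrC h g) (esym sE)).
have : swapXY g`_0 * swapXY h`_0 = s%:P.
  by rewrite -rmorphM -swapXY_map_polyC; congr swapXY; apply: polyC_inj; rewrite polyCM -gE -hE.
move/(polyC_of_mul_polyC s_neq0) => g0E.
by exists (swapXY g`_0)`_0; rewrite {1}gE /= -swapXY_polyC -g0E swapXYK.
Qed.

Local Notation Pmod n := ((1 - pa * pq ^+ n) * (pa - pq ^+ n)).

Definition Pmodq (n : nat) : Pq := (1 - ('X : Pa)%:P * 'X ^+ n) * (('X : Pa)%:P - 'X ^+ n).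

Lemma PmodE n : Pmod n = (Pmodq n)%:P.
Proof. by rewrite /Pmodq /pa /pq !(rmorphM, rmorphB, rmorph1, rmorphXn). Qed.

Lemma swapXY_Pmodq n : swapXY (Pmodq n) =
  (- 'X^n)%:P + (1 + 'X^(2 * n))%:P * 'X + (- 'X^n)%:P * 'X^2 :> {poly {poly rat}}.
Proof.
rewrite /Pmodq !(rmorphM, rmorphB, rmorph1, rmorphXn) /= swapXY_polyC swapXY_X map_polyX.
rewrite !(rmorphD, rmorphN, rmorph1, rmorphXn) /= mulnC exprM.
by set y := (_ ^+ n : {poly {poly rat}}); ring.
Qed.

Lemma embq_dvd_unit n r : pdivides (embq r) (Pmod n) -> r \is a GRing.unit.
Proof.
rewrite PmodE => -[c Pc].
have coef0 : (swapXY (Pmodq n))`_0 = - 'X^n.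
  by rewrite swapXY_Pmodq !coefD !coefCM coefC coefX coefXn /= !mulr0 !addr0.
have coef1 : (swapXY (Pmodq n))`_1 = 1 + 'X^(2 * n).
  by rewrite swapXY_Pmodq !coefD !coefCM coefC coefX coefXn /= mulr1 mulr0 add0r addr0.
have Pq_neq0 : Pmodq n != 0.
  apply: contra_eq_neq coef0 => ->.
  by rewrite rmorph0 coef0 eq_sym oppr_eq0 -size_poly_eq0 size_polyXn.
have cE := polyC_of_mul_polyC Pq_neq0 (etrans (mulrC c _) (esym Pc)).
have : swapXY (Pmodq n) = r%:P * swapXY c`_0.
  rewrite -swapXY_map_polyC -rmorphM; congr swapXY; apply: polyC_inj.
  by rewrite Pc {1}cE polyCM.
(* r divides both q^n and 1 + q^(2n). *)
move=> swapE; move: coef0 coef1; rewrite swapE !coefCM => u0E u1E.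
apply/unitrPr; exists ((swapXY c`_0)`_1 + 'X^n * (swapXY c`_0)`_0).
by rewrite mulrDr mulrCA u1E u0E mulrN -exprD addnn -mul2n addrK.
Qed.

Lemma pcoprime_Pmod_denom n i r : r != 0 -> pcoprime (Pmod n) (pa ^+ i * embq r).
Proof.
move=> r_neq0 g gP [c2 c2E].
have Xr_neq0 : 'X^(n * i) * r != 0 by rewrite mulf_neq0 // -size_poly_eq0 size_polyXn.
suff /(dvd_embq Xr_neq0) [s gE] : pdivides g (embq ('X^(n * i) * r)).
  by rewrite gE in gP *; apply: rmorph_unit; apply: embq_dvd_unit gP.
(* a w - q^n is the modulus, so q^(ni) r = w^i (a^i r) modulo it is divisible by g. *)
set w := 1 + pq ^+ (2 * n) - pq ^+ n * pa.
have Pw : pa * w - pq ^+ n = Pmod n.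
  by rewrite /w mulnC exprM; ring.
case: gP => c1 c1E; have := subrXX (pa * w) (pq ^+ n) i; rewrite Pw c1E.
set S := \sum_(j < i) _ => powE.
have awE : (pa * w) ^+ i * embq r = g * (w ^+ i * c2).
  by rewrite exprMn mulrAC c2E -mulrA (mulrC c2).
exists (w ^+ i * c2 - c1 * S * embq r).
rewrite rmorphM rmorphXn embqX exprM.
have -> : (pq ^+ n) ^+ i = (pa * w) ^+ i - g * c1 * S by rewrite -powE opprB addrC subrK.
by rewrite mulrBl awE; ring.
Qed.

(* Denominators a^i r(q); they are coprime to the modulus by [pcoprime_Pmod_denom]. *)
Definition aq_denom (d : Px) := exists i r, r != 0 /\ d = pa ^+ i * embq r.

Definition aq_frac (y : Fx) := exists c d, aq_denom d /\ y * toF d = toF c.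

Lemma aq_denom1 : aq_denom 1.
Proof. by exists 0%N, 1; rewrite oner_neq0 rmorph1 mulr1. Qed.

Lemma aq_denomM d d' : aq_denom d -> aq_denom d' -> aq_denom (d * d').
Proof.
move=> [i [r [r_neq0 ->]]] [i' [r' [r'_neq0 ->]]].
exists (i + i')%N, (r * r'); rewrite mulf_neq0 // rmorphM exprD; split=> //; ring.
Qed.

Lemma aq_frac_toF p : aq_frac (toF p).
Proof. by exists p, 1; rewrite rmorph1 mulr1; split=> //; apply: aq_denom1. Qed.

Lemma aq_fracD y y' : aq_frac y -> aq_frac y' -> aq_frac (y + y').
Proof.
move=> [c [d [Dd yE]]] [c' [d' [Dd' y'E]]].
exists (c * d' + c' * d), (d * d'); split; first exact: aq_denomM.
by rewrite /= rmorphD !rmorphM /= -yE -y'E; ring.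
Qed.

Lemma aq_fracM y y' : aq_frac y -> aq_frac y' -> aq_frac (y * y').
Proof.
move=> [c [d [Dd yE]]] [c' [d' [Dd' y'E]]].
exists (c * c'), (d * d'); split; first exact: aq_denomM.
by rewrite !rmorphM /= -yE -y'E; ring.
Qed.

Lemma aq_fracN y : aq_frac y -> aq_frac (- y).
Proof. by move=> [c [d [Dd yE]]]; exists (- c), d; rewrite rmorphN /= -yE mulNr. Qed.

Lemma aq_fracX y m : aq_frac y -> aq_frac (y ^+ m).
Proof.
move=> y_frac; elim: m => [|m IH].
  by rewrite expr0 -(rmorph1 toF); apply: aq_frac_toF.
by rewrite exprS; apply: aq_fracM.
Qed.

Lemma aq_frac_prod (I : Type) (s : seq I) (F : I -> Fx) :
  (forall i, aq_frac (F i)) -> aq_frac (\prod_(i <- s) F i).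
Proof.
move=> F_frac; elim: s => [|i s IH].
  by rewrite big_nil -(rmorph1 toF); apply: aq_frac_toF.
by rewrite big_cons; apply: aq_fracM.
Qed.

Lemma A_neq0 : A != 0.
Proof. by rewrite tofrac_eq0 !polyC_eq0 -size_poly_eq0 size_polyX. Qed.

Lemma aq_frac_invA : aq_frac A^-1.
Proof.
exists 1, pa; split; last by rewrite mulVf ?A_neq0 // rmorph1.
by exists 1%N, 1; rewrite oner_neq0 rmorph1 mulr1 expr1.
Qed.

Lemma aq_frac_inv_embq r : toF (embq r) != 0 -> aq_frac (toF (embq r))^-1.
Proof.
move=> nz; exists 1, (embq r); split; last by rewrite mulVf ?rmorph1.
exists 0%N, r; rewrite expr0 mul1r; split=> //.
by apply: contraNneq nz => ->; rewrite !rmorph0.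
Qed.

Definition aq_dvd (m y : Fx) := exists z, aq_frac z /\ y = m * z.

Lemma aq_dvdD m y y' : aq_dvd m y -> aq_dvd m y' -> aq_dvd m (y + y').
Proof.
move=> [z [z_frac ->]] [z' [z'_frac ->]].
by exists (z + z'); rewrite -mulrDr; split=> //; apply: aq_fracD.
Qed.

Lemma aq_dvdMr m y g : aq_dvd m y -> aq_frac g -> aq_dvd m (y * g).
Proof.
move=> [z [z_frac ->]] g_frac.
by exists (z * g); rewrite mulrA; split=> //; apply: aq_fracM.
Qed.

Lemma aq_dvd0 m : aq_dvd m 0.
Proof. by exists 0; rewrite mulr0 -(rmorph0 toF); split=> //; apply: aq_frac_toF. Qed.

Lemma aq_dvd_sum m (I : Type) (s : seq I) (F : I -> Fx) :
  (forall i, aq_dvd m (F i)) -> aq_dvd m (\sum_(i <- s) F i).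
Proof.
move=> F_dvd; elim: s => [|i s IH]; first by rewrite big_nil; apply: aq_dvd0.
by rewrite big_cons; apply: aq_dvdD.
Qed.

Lemma aq_dvd_prodB m (I : Type) (s : seq I) (F G : I -> Fx) :
  (forall i, aq_frac (F i)) -> (forall i, aq_frac (G i)) ->
  (forall i, aq_dvd m (F i - G i)) ->
  aq_dvd m (\prod_(i <- s) F i - \prod_(i <- s) G i).
Proof.
move=> F_frac G_frac FG_dvd.
elim: s => [|i s IH]; first by rewrite !big_nil subrr; apply: aq_dvd0.
rewrite !big_cons.
have -> : F i * \prod_(j <- s) F j - G i * \prod_(j <- s) G j =
    (F i - G i) * \prod_(j <- s) F j + (\prod_(j <- s) F j - \prod_(j <- s) G j) * G i.
  by ring.
by apply: aq_dvdD; apply: aq_dvdMr => //; apply: aq_frac_prod.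
Qed.

Lemma congr_mod_of_aq_dvd n U V :
  aq_dvd (toF (Pmod n)) (U - V) -> congr_mod (Pmod n) U V.
Proof.
move=> [z [[c [d [[i [r [r_neq0 dE]]] zE]]] UVE]].
exists c, d; split; first by rewrite dE; apply: pcoprime_Pmod_denom.
by rewrite UVE -mulrA zE rmorphM.
Qed.

Lemma Qv_neq0 : Qv != 0.
Proof. by rewrite tofrac_eq0 polyC_eq0 -size_poly_eq0 size_polyX. Qed.

Lemma Qv_pow_neq1 m : (0 < m)%N -> Qv ^+ m != 1.
Proof.
move=> m_gt0; rewrite -rmorphXn -(rmorph1 toF) /= tofrac_eq -rmorphXn -(rmorph1 polyC) /=.
rewrite (inj_eq polyC_inj); apply/eqP => XmE.
by have := size_polyXn Pa m; rewrite XmE size_poly1 => -[m0]; rewrite -m0 in m_gt0.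
Qed.

Lemma aq_frac_invQv : aq_frac Qv^-1.
Proof. by rewrite /Qv -embqX; apply: aq_frac_inv_embq; rewrite embqX Qv_neq0. Qed.

Lemma toF_Pmod n : toF (Pmod n) = (1 - A * Qv ^+ n) * (A - Qv ^+ n).
Proof.
(* Arguments are given explicitly: matching [toF 1] against [toF pa] would
   unfold the polynomials and is very slow. *)
by rewrite (rmorphM toF) (rmorphB toF 1) (rmorphB toF pa) (rmorphM toF pa) (rmorphXn toF) /=
  -(rmorph1 toF).
Qed.

Lemma aq_dvd_sym_sub n :
  aq_dvd (toF (Pmod n)) (A + A^-1 - (Qv ^+ n + (Qv ^+ n)^-1)).
Proof.
rewrite (sub_addr_inv A_neq0 (expf_neq0 n Qv_neq0)) toF_Pmod.
exists (- (A * Qv ^+ n)^-1); split=> //.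
apply/aq_fracN; rewrite invfM -exprVn.
by apply: aq_fracM; [apply: aq_frac_invA | apply/aq_fracX/aq_frac_invQv].
Qed.

Lemma aq_dvd_qpoch_symB m s t k : aq_frac s -> aq_frac t -> aq_dvd m (s - t) ->
  aq_dvd m (qpoch_sym Qv s k - qpoch_sym Qv t k).
Proof.
have frac_Qv j : aq_frac (Qv ^+ j) by apply/aq_fracX/aq_frac_toF.
have frac_factor u i :
    aq_frac u -> aq_frac (1 + Qv ^+ (4 * i + 2) - Qv ^+ (2 * i + 1) * u).
  move=> u_frac; rewrite -(rmorph1 toF); apply: aq_fracD; last by apply/aq_fracN/aq_fracM.
  exact/aq_fracD/frac_Qv/aq_frac_toF.
move=> s_frac t_frac st_dvd.
apply: aq_dvd_prodB => i; [exact: frac_factor | exact: frac_factor | ].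
have -> : 1 + Qv ^+ (4 * i + 2) - Qv ^+ (2 * i + 1) * s
          - (1 + Qv ^+ (4 * i + 2) - Qv ^+ (2 * i + 1) * t) =
        (s - t) * - Qv ^+ (2 * i + 1) by ring.
by apply: aq_dvdMr => //; apply/aq_fracN.
Qed.

Lemma rmorph_qpochhammer (R S : pzRingType) (f : {rmorphism R -> S}) y b m :
  f (qpochhammer y b m) = qpochhammer (f y) (f b) m.
Proof.
by rewrite rmorph_prod; apply: eq_bigr => i _; rewrite rmorphB rmorph1 rmorphM rmorphXn.
Qed.

Lemma aq_frac_inv_qfac k : aq_frac (qpochhammer (Qv ^+ 2) (Qv ^+ 2) k)^-1.
Proof.
have qfacE : qpochhammer (Qv ^+ 2) (Qv ^+ 2) k =
    toF (embq (qpochhammer ('X ^+ 2) ('X ^+ 2) k)).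
  by rewrite rmorph_qpochhammer rmorphXn embqX rmorph_qpochhammer /= rmorphXn.
rewrite qfacE; apply: aq_frac_inv_embq; rewrite -qfacE.
by apply: qfac_neq0 => j j_gt0; rewrite -exprM Qv_pow_neq1 // muln_gt0.
Qed.

Lemma qpochE : qpoch = @qpochhammer Fx.
Proof. by []. Qed.

Lemma qbinomE : qbinom = @qbinomial Fx.
Proof. by []. Qed.

Theorem theorem4p1 (n : nat) (hn : (0 < n)%N) (hodd : odd n) :
  congr_mod ((1 - pa * pq ^+ n) * (pa - pq ^+ n))
    (\sum_(k < n)
        qpoch (A * Qv) (Qv ^+ 2) k * qpoch (Qv / A) (Qv ^+ 2) k
        / (qpoch (Qv ^+ 2) (Qv ^+ 2) k) ^+ 2 * X ^+ k)
    (\sum_(k < (n.-1)./2.+1)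
        (qbinom (Qv ^+ 2) (n.-1)./2 k) ^+ 2
        * Qv ^ ((k ^ 2)%:Z - (n * k)%:Z)
        * (- X) ^+ k * qpoch X (Qv ^+ 2) ((n.-1)./2 - k)).
Proof.
(* [hn] is implied by [hodd]. *)
have Qv2_pow_neq1 j : (0 < j)%N -> (Qv ^+ 2) ^+ j != 1.
  by move=> j_gt0; rewrite -exprM Qv_pow_neq1 // muln_gt0.
rewrite qpochE qbinomE -(qseries_at_qn Qv_neq0 Qv2_pow_neq1 X hodd).
apply: congr_mod_of_aq_dvd; rewrite -sumrB; apply: aq_dvd_sum => k.
rewrite (qpochhammer_mul_symE _ _ A_neq0) (qpochhammer_mul_symE _ _ (expf_neq0 n Qv_neq0)).
rewrite -!mulrBl -mulrA; apply: aq_dvdMr.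
  apply: aq_dvd_qpoch_symB; last exact: aq_dvd_sym_sub.
    exact: aq_fracD (aq_frac_toF _) aq_frac_invA.
  by rewrite -exprVn; apply: aq_fracD; apply: aq_fracX; [apply: aq_frac_toF | apply: aq_frac_invQv].
rewrite -exprVn; apply: aq_fracM; apply: aq_fracX; [exact: aq_frac_inv_qfac | exact: aq_frac_toF].
Qed.
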